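(* Let $n,m\ge1$, $r>0$, and let $\mathbf b_1,\dots,\mathbf b_m\in[0,\infty)^n$ be nonzero vectors. Put $D_{ij}=\frac{r}{m}(\mathbf b_i\cdot\mathbf b_j)$ and $\overline D=\max_{i,j}D_{ij}$. Define $\alpha^{(t)}\in\mathbb{R}^m$, $t\ge0$, by $\alpha^{(0)}_k=\sqrt{1/(\overline D m)}$ for all $k$, and, given $\alpha^{(t)}$: let $E_i^{(t)}=\sum_{j=1}^m D_{ij}\alpha^{(t)}_i\alpha^{(t)}_j-1$, choose $k=k_t$ with $|E^{(t)}_k|\ge|E^{(t)}_i|$ for all $i$, set $\alpha^{(t+1)}_i=\alpha^{(t)}_i$ for $i\neq k$ and $\alpha^{(t+1)}_k=\frac{-s+\sqrt{s^2+4D_{kk}}}{2D_{kk}}$ with $s=\sum_{i\ne k}D_{ik}\alpha^{(t)}_i$. Let $E^{(t)}=\sum_{i=1}^m|E^{(t)}_i|$ and $E^\infty=\lim_{t\to\infty}E^{(t)}$. If $E^\infty>0$, then there is $c>0$ such that for every $t\ge0$, with $k=k_t$, $$\big|\alpha^{(t+1)}_k-\alpha^{(t)}_k\big|\,D_{kk}\,\alpha^{(t)}_k\ \ge\ c .$$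
   Context: The limit $E^\infty$ exists because $(E^{(t)})$ is a nonincreasing sequence of nonnegative numbers. *)

From HB Require Import structures.
From mathcomp Require Import all_boot all_order all_algebra.
From mathcomp Require Import all_classical all_reals all_analysis.
Set Implicit Arguments. Unset Strict Implicit. Unset Printing Implicit Defensive.
Import Order.TTheory GRing.Theory Num.Theory.
Local Open Scope ring_scope.

Section Defs.
Variables (R : realType) (n m : nat) (r : R) (b : 'I_m -> 'I_n -> R).

Definition Dm (i j : 'I_m) : R := r / m%:R * \sum_(l < n) b i l * b j l.

(* Dbar = max_{i,j} D_ij  (all D_ij >= 0, so 0 is a harmless neutral element) *)
Definition Dbar : R := \big[Num.max/0]_(ij : 'I_m * 'I_m) Dm ij.1 ij.2.

Definition alpha0 (k : 'I_m) : R := Num.sqrt (1 / (Dbar * m%:R)).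

Definition Ei (a : 'I_m -> R) (i : 'I_m) : R :=
  \sum_(j < m) Dm i j * a i * a j - 1.

Definition Etot (a : 'I_m -> R) : R := \sum_(i < m) `|Ei a i|.

Definition upd (a : 'I_m -> R) (k : 'I_m) : 'I_m -> R :=
  fun i => if i == k then
     let s := \sum_(j < m | j != k) Dm j k * a j in
     (- s + Num.sqrt (s ^+ 2 + 4 * Dm k k)) / (2 * Dm k k)
   else a i.
End Defs.

From HB Require Import structures.
From mathcomp Require Import all_boot all_order all_algebra.
From mathcomp Require Import all_classical all_reals all_analysis.
From mathcomp Require Import ring lra.
Import Order.TTheory GRing.Theory Num.Theory.
Import numFieldNormedType.Exports.
Set Implicit Arguments. Unset Strict Implicit.
Local Open Scope ring_scope.

(* Updating coordinate [k] solves the [k]-th equation exactly and moves the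
   other errors by at most [s |alpha'_k - alpha_k| <= |E_k|] in total, so [E^(t)]
   is nonincreasing and, by the greedy choice, [E^oo <= m |E_k^(t)|]. All iterates
   stay in a box [L, U] depending only on D, whence [D_kk alpha_k alpha'_k >= q]
   uniformly. Since the update satisfies
   [|alpha'_k - alpha_k| D_kk alpha_k (D_kk alpha_k alpha'_k + 1)
      = |E_k| D_kk alpha_k alpha'_k],
   every step is at least [(E^oo / m) q / (q + 1)]. *)

Lemma quadratic_pos_root (R : rcfType) (d s : R) : 0 < d -> 0 <= s ->
  let x := (- s + Num.sqrt (s ^+ 2 + 4 * d)) / (2 * d) in
  0 < x /\ d * x ^+ 2 + s * x = 1.
Proof.
move=> d0 s0 x; set q := Num.sqrt (s ^+ 2 + 4 * d).
have q2 : q ^+ 2 = s ^+ 2 + 4 * d by rewrite sqr_sqrtr //; nra.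
have s_lt_q : s < q.
  by rewrite -(ger0_norm s0) -sqrtr_sqr /q ltr_sqrt; nra.
have dx : 2 * d * x = - s + q by rewrite /x mulrC divfK //; lra.
split.
  have : 0 < 2 * d * x by lra.
  by rewrite pmulr_rgt0 //; lra.
apply: (@mulfI _ (4 * d)); first lra.
have -> : 4 * d * (d * x ^+ 2 + s * x) = (2 * d * x) ^+ 2 + 2 * s * (2 * d * x) by ring.
rewrite dx; nra.
Qed.

Lemma le_add1_invr (R : realFieldType) (d a : R) :
  0 < d -> 0 < a -> d * a ^+ 2 <= 1 -> a <= 1 + d^-1.
Proof.
move=> d0 a0 da; rewrite -(ler_pM2l d0) mulrDr mulr1 divff ?gt_eqF //.
case: (lerP a 1) => a1.
  have : d * a <= d * 1 by rewrite ler_pM2l.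
  lra.
have : d * a <= d * a ^+ 2 by rewrite expr2 mulrA ler_peMr //; nra.
lra.
Qed.

(* The identity says [Y = E * p / (p + 1)], and [p / (p + 1)] increases with [p]. *)
Lemma ge_scaled_ratio (R : realFieldType) (Y E p q g : R) :
  0 < q -> q <= p -> 0 < g -> g <= E -> Y * (p + 1) = E * p ->
  g * (q / (q + 1)) <= Y.
Proof.
move=> q0 qp g0 gE YE.
rewrite mulrA ler_pdivrMr; last lra.
rewrite -(@ler_pM2l _ (p + 1)); last lra.
have -> : (p + 1) * (Y * (q + 1)) = E * p * (q + 1) by rewrite -YE; ring.
have gp : g * p <= E * p by rewrite ler_wpM2r //; lra.
have gq : g * q <= g * p by rewrite ler_wpM2l //; lra.
have gpq : g * p * q <= E * p * q by rewrite ler_wpM2r //; lra.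
nra.
Qed.

Section CoordinateUpdate.
Variables (R : realType) (n m : nat) (r : R) (b : 'I_m -> 'I_n -> R).
Hypotheses (m_gt0 : (0 < m)%N) (r_gt0 : 0 < r) (b_ge0 : forall i l, 0 <= b i l)
  (b_neq0 : forall i, exists l, b i l != 0).

Local Notation D := (Dm r b).
Local Notation E := (Ei r b).
Local Notation upd := (upd r b).

Lemma Dm_sym i j : D i j = D j i.
Proof. by rewrite /Dm; congr (_ * _); apply: eq_bigr => l _; rewrite mulrC. Qed.

Lemma Dm_ge0 i j : 0 <= D i j.
Proof.
apply: mulr_ge0; first by rewrite divr_ge0 ?ler0n ?ltW.
by apply: sumr_ge0 => l _; apply: mulr_ge0.
Qed.

Lemma Dm_diag_gt0 i : 0 < D i i.
Proof.
have [l bl] := b_neq0 i.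
apply: mulr_gt0; first by rewrite divr_gt0 ?ltr0n.
rewrite (bigD1 l) //= ltr_wpDr //; first by apply: sumr_ge0 => j _; apply: mulr_ge0.
by rewrite mulr_gt0 // lt_def bl b_ge0.
Qed.

Lemma Dm_le_Dbar i j : D i j <= Dbar r b.
Proof. by rewrite /Dbar (bigD1 (i, j)) //= le_max lexx. Qed.

Definition cross (a : 'I_m -> R) (k : 'I_m) : R := \sum_(j < m | j != k) D j k * a j.

Lemma cross_ge0 a k : (forall j, 0 <= a j) -> 0 <= cross a k.
Proof. by move=> a_ge0; apply: sumr_ge0 => j _; rewrite mulr_ge0 ?Dm_ge0. Qed.

Lemma Ei_diag a k : E a k = a k * (D k k * a k + cross a k) - 1.
Proof.
rewrite /Ei /cross (bigD1 k) //= mulrDr mulr_sumr; congr (_ + _ - _); first ring.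
by apply: eq_bigr => j _; rewrite Dm_sym; ring.
Qed.

Lemma upd_same a k :
  upd a k k = (- cross a k + Num.sqrt (cross a k ^+ 2 + 4 * D k k)) / (2 * D k k).
Proof. by rewrite /upd eqxx. Qed.

Lemma upd_other a k i : i != k -> upd a k i = a i.
Proof. by rewrite /upd => /negbTE ->. Qed.

Lemma cross_upd a k : cross (upd a k) k = cross a k.
Proof. by apply: eq_bigr => j jk; rewrite upd_other. Qed.

Lemma Ei_upd_other a k i : i != k ->
  E (upd a k) i = E a i + D i k * a i * (upd a k k - a k).
Proof.
move=> ik; rewrite /Ei (bigD1 k) //= [in RHS](bigD1 k) //= upd_other //.
under eq_bigr => j jk do rewrite upd_other //.
ring.
Qed.

Section Step.
Variables (a : 'I_m -> R) (k : 'I_m).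
Hypothesis a_ge0 : forall j, 0 <= a j.

Local Notation x := (upd a k k).
Local Notation d := (D k k).
Local Notation s := (cross a k).

Lemma upd_root : 0 < x /\ d * x ^+ 2 + s * x = 1.
Proof. by rewrite upd_same; apply: quadratic_pos_root; [exact: Dm_diag_gt0 | exact: cross_ge0]. Qed.

Lemma Ei_upd_same : E (upd a k) k = 0.
Proof.
rewrite Ei_diag cross_upd -[RHS](subrr 1) -(proj2 upd_root).
congr (_ - _); ring.
Qed.

Lemma Ei_factor : E a k = (a k - x) * (d * (a k + x) + s).
Proof. by rewrite Ei_diag -(proj2 upd_root); ring. Qed.

Lemma Etot_upd_le : Etot r b (upd a k) <= Etot r b a.
Proof.
rewrite /Etot (bigD1 k) //= Ei_upd_same normr0 add0r [leRHS](bigD1 k) //= addrC.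
apply: (@le_trans _ _ (\sum_(i < m | i != k) (`|E a i| + D i k * a i * `|x - a k|))).
  apply: ler_sum => i ik; rewrite Ei_upd_other //.
  apply: le_trans (ler_normD _ _) _.
  by rewrite lerD2l normrM ger0_norm // mulr_ge0 ?Dm_ge0.
rewrite big_split /= lerD2l -mulr_suml Ei_factor normrM distrC mulrC ler_wpM2l //.
have [x_gt0 _] := upd_root; have s_ge0 := cross_ge0 k a_ge0.
have dax_ge0 : 0 <= d * (a k + x) by rewrite mulr_ge0 ?Dm_ge0 //; have := a_ge0 k; lra.
by rewrite ger0_norm -/(cross a k); lra.
Qed.

Lemma step_identity :
  `|x - a k| * d * a k * (d * a k * x + 1) = `|E a k| * (d * a k * x).
Proof.
have [x_gt0 root] := upd_root.
have Ex : E a k * x = (a k - x) * (d * a k * x + 1) by rewrite Ei_factor -root; ring.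
have dax_ge0 : 0 <= d * a k * x by rewrite (mulr_ge0 (mulr_ge0 (Dm_ge0 _ _) (a_ge0 _))) ?ltW.
have dax1_ge0 : 0 <= d * a k * x + 1 by lra.
have := congr1 Num.norm Ex.
rewrite !normrM (gtr0_norm x_gt0) (ger0_norm dax1_ge0) (distrC (a k)) => {}Ex.
have -> : `|E a k| * (d * a k * x) = `|E a k| * x * (d * a k) by ring.
by rewrite Ex; ring.
Qed.

End Step.

Lemma Etot_le_greedy a k : (forall i, `|E a i| <= `|E a k|) ->
  Etot r b a <= m%:R * `|E a k|.
Proof.
move=> greedy; apply: le_trans (ler_sum _ (fun i _ => greedy i)) _.
by rewrite sumr_const card_ord mulr_natl.
Qed.

Definition Ubound : R := \sum_(i < m) (1 + (D i i)^-1).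
Definition Ssum : R := \sum_(i < m) \sum_(j < m) D i j.
Definition Lbound : R := Num.min (Num.sqrt (1 / (Dbar r b * m%:R))) (Ubound * Ssum)^-1.

Definition feasible (a : 'I_m -> R) : Prop :=
  forall j, Lbound <= a j /\ D j j * a j ^+ 2 <= 1.

Lemma le_Ubound i : 1 + (D i i)^-1 <= Ubound.
Proof.
rewrite /Ubound (bigD1 i) //= lerDl; apply: sumr_ge0 => j _.
by rewrite addr_ge0 ?invr_ge0 ?ltW ?Dm_diag_gt0.
Qed.

Lemma Ubound_gt0 : 0 < Ubound.
Proof.
apply: lt_le_trans (le_Ubound (Ordinal m_gt0)).
by rewrite ltr_pwDl ?invr_ge0 ?ltW ?Dm_diag_gt0.
Qed.

Lemma invUbound_le_Dm i : Ubound^-1 <= D i i.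
Proof.
have Dii_gt0 := Dm_diag_gt0 i.
rewrite -[D i i]invrK lef_pV2 ?posrE ?invr_gt0 ?Ubound_gt0 //.
by apply: le_trans (le_Ubound i); rewrite lerDr.
Qed.

Lemma colsum_le_Ssum k : \sum_(j < m) D j k <= Ssum.
Proof.
apply: ler_sum => j _; rewrite [leRHS](bigD1 k) //= lerDl.
by apply: sumr_ge0 => i _; apply: Dm_ge0.
Qed.

Lemma Ssum_gt0 : 0 < Ssum.
Proof.
pose i0 := Ordinal m_gt0.
apply: lt_le_trans (colsum_le_Ssum i0); rewrite (bigD1 i0) //=.
by rewrite ltr_pwDl ?Dm_diag_gt0 //; apply: sumr_ge0 => j _; apply: Dm_ge0.
Qed.

Lemma Lbound_gt0 : 0 < Lbound.
Proof.
have Dbar_gt0 : 0 < Dbar r b := lt_le_trans (Dm_diag_gt0 (Ordinal m_gt0)) (Dm_le_Dbar _ _).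
rewrite lt_min sqrtr_gt0 divr_gt0 ?mulr_gt0 ?ltr0n //=.
by rewrite invr_gt0 mulr_gt0 ?Ubound_gt0 ?Ssum_gt0.
Qed.

Lemma feasible_gt0 a j : feasible a -> 0 < a j.
Proof. by move=> /(_ j) [La _]; apply: lt_le_trans La; apply: Lbound_gt0. Qed.

Lemma feasible_le_Ubound a j : feasible a -> a j <= Ubound.
Proof.
move=> feas; apply: le_trans (le_Ubound j).
by apply: le_add1_invr; [apply: Dm_diag_gt0 | apply: feasible_gt0 | have [] := feas j].
Qed.

Lemma alpha0_feasible : feasible (alpha0 r b).
Proof.
move=> j; split; first by rewrite /alpha0 ge_min lexx.
have Dbar_gt0 : 0 < Dbar r b := lt_le_trans (Dm_diag_gt0 j) (Dm_le_Dbar _ _).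
have m_ge1 : 1 <= m%:R :> R by rewrite ler1n.
have X_ge0 : 0 <= 1 / (Dbar r b * m%:R) by rewrite divr_ge0 ?mulr_ge0 ?ler0n ?ltW.
rewrite /alpha0 sqr_sqrtr // mulrA mulr1 ler_pdivrMr ?mulr_gt0 ?ltr0n // mul1r.
apply: le_trans (Dm_le_Dbar j j) _.
by rewrite ler_peMr // ltW.
Qed.

Lemma diag_cross_le a k y : y <= Ubound -> (forall j, a j <= Ubound) ->
  D k k * y + cross a k <= Ubound * Ssum.
Proof.
move=> yU aU; apply: (@le_trans _ _ (Ubound * \sum_(j < m) D j k)).
  rewrite (bigD1 k) //= mulrDr mulr_sumr [Ubound * _]mulrC lerD ?ler_wpM2l ?Dm_ge0 //.
  by apply: ler_sum => j _; rewrite mulrC ler_wpM2r ?Dm_ge0.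
by apply: ler_wpM2l; [exact: ltW Ubound_gt0 | exact: colsum_le_Ssum].
Qed.

(* The updated coordinate solves [x (D_kk x + s) = 1], so it is at least
   [1 / (D_kk x + s)], and the denominator is bounded uniformly. *)
Lemma upd_feasible a k : feasible a -> feasible (upd a k).
Proof.
move=> feas j; have [->|jk] := eqVneq j k; last by rewrite upd_other.
have a_ge0 i : 0 <= a i by apply/ltW/feasible_gt0.
have [x_gt0 root] := upd_root k a_ge0.
have sx_ge0 : 0 <= cross a k * upd a k k by rewrite mulr_ge0 ?cross_ge0 ?ltW.
have dx2_le1 : D k k * upd a k k ^+ 2 <= 1 by lra.
split => //; apply: le_trans (_ : Lbound <= (Ubound * Ssum)^-1) _.
  by rewrite ge_min lexx orbT.
have xU : upd a k k <= Ubound.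
  by apply: le_trans (le_Ubound k); apply: le_add1_invr; rewrite ?Dm_diag_gt0.
have den_le := diag_cross_le k xU (fun i => feasible_le_Ubound i feas).
have x_den : upd a k k * (D k k * upd a k k + cross a k) = 1 by rewrite -root; ring.
rewrite -[_^-1]mul1r ler_pdivrMr ?mulr_gt0 ?Ubound_gt0 ?Ssum_gt0 // -{1}x_den.
by rewrite ler_wpM2l // ltW.
Qed.

Definition product_floor : R := Lbound ^+ 2 / Ubound.

Lemma product_floor_gt0 : 0 < product_floor.
Proof. by rewrite divr_gt0 ?exprn_gt0 ?Lbound_gt0 ?Ubound_gt0. Qed.

Lemma product_floor_le a a' k : feasible a -> feasible a' ->
  product_floor <= D k k * a k * a' k.
Proof.
move=> /(_ k) [La _] /(_ k) [La' _]; have L_gt0 := Lbound_gt0.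
rewrite /product_floor mulrC expr2 mulrA.
have Uinv_ge0 : 0 <= Ubound^-1 by rewrite invr_ge0 ltW ?Ubound_gt0.
rewrite ler_pM ?mulr_ge0 ?(ltW L_gt0) // ler_pM ?(ltW L_gt0) //.
exact: invUbound_le_Dm.
Qed.

Section Iterates.
Variables (alpha : nat -> 'I_m -> R) (k : nat -> 'I_m).
Hypotheses (alpha_0 : alpha 0%N = alpha0 r b)
  (alpha_S : forall t, alpha t.+1 = upd (alpha t) (k t))
  (k_greedy : forall t i, `|E (alpha t) i| <= `|E (alpha t) (k t)|).

Local Notation Einf := (limn (fun t => Etot r b (alpha t))).

Lemma alpha_feasible t : feasible (alpha t).
Proof.
elim: t => [|t IH]; first by rewrite alpha_0; apply: alpha0_feasible.
by rewrite alpha_S; apply: upd_feasible.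
Qed.

Lemma alpha_ge0 t j : 0 <= alpha t j.
Proof. exact/ltW/feasible_gt0/alpha_feasible. Qed.

Lemma Etot_alpha_nonincreasing : nonincreasing_seq (fun t => Etot r b (alpha t)).
Proof. by apply/nonincreasing_seqP => t; rewrite alpha_S Etot_upd_le // => j; apply: alpha_ge0. Qed.

Lemma lim_Etot_alpha_le t : Einf <= Etot r b (alpha t).
Proof.
apply: nonincreasing_cvgn_ge Etot_alpha_nonincreasing _ t.
apply: nonincreasing_is_cvgn Etot_alpha_nonincreasing _.
by exists 0 => _ [s _ <-]; apply: sumr_ge0.
Qed.

Lemma step_lower_bound t : 0 < Einf ->
  Einf / m%:R * (product_floor / (product_floor + 1)) <=
  `|alpha t.+1 (k t) - alpha t (k t)| * D (k t) (k t) * alpha t (k t).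
Proof.
move=> Einf_gt0; have floor_le := product_floor_le (k t) (alpha_feasible t) (alpha_feasible t.+1).
rewrite alpha_S in floor_le *.
apply: ge_scaled_ratio (step_identity (k t) (alpha_ge0 t)) => //.
- exact: product_floor_gt0.
- by rewrite divr_gt0 ?ltr0n.
- rewrite ler_pdivrMr ?ltr0n // mulrC.
  exact: le_trans (lim_Etot_alpha_le t) (Etot_le_greedy (k_greedy t)).
Qed.

End Iterates.
End CoordinateUpdate.

Theorem lemma4 (R : realType) (n m : nat) (r : R) (b : 'I_m -> 'I_n -> R)
  (alpha : nat -> 'I_m -> R) (k : nat -> 'I_m) :
  (0 < n)%N -> (0 < m)%N -> 0 < r ->
  (forall i l, 0 <= b i l) ->
  (forall i, exists l, b i l != 0) ->
  alpha 0%N = alpha0 r b ->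
  (forall t i, `|Ei r b (alpha t) i| <= `|Ei r b (alpha t) (k t)|) ->
  (forall t, alpha t.+1 = upd r b (alpha t) (k t)) ->
  0 < limn (fun t => Etot r b (alpha t)) ->
  exists2 c : R, 0 < c &
    forall t, c <= `|alpha t.+1 (k t) - alpha t (k t)| * Dm r b (k t) (k t) * alpha t (k t).
Proof.
move=> _ m_gt0 r_gt0 b_ge0 b_neq0 alpha_0 k_greedy alpha_S Einf_gt0.
have q_gt0 := product_floor_gt0 m_gt0 r_gt0 b_ge0 b_neq0.
exists (limn (fun t => Etot r b (alpha t)) / m%:R * (product_floor r b / (product_floor r b + 1))).
  by apply: mulr_gt0; rewrite divr_gt0 ?ltr0n ?addr_gt0.
by move=> t; apply: step_lower_bound.
Qed.
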